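(* Let $q$ be a power of an odd prime and let $f(X) \in \mathbb{F}_{q^2}[X]$ be a planar polynomial all of whose coefficients belong to the subfield $\mathbb{F}_q$. Then the orthogonal polarity graph $G_f$ satisfies \[ \alpha(G_f) \geq \tfrac{1}{2} q^2 (q-1), \] where $\alpha$ denotes the independence number.
   Context: Let $Q$ be a power of an odd prime. A polynomial $f(X)\in\mathbb{F}_Q[X]$ is planar if for every $a\in\mathbb{F}_Q^*$ the map $x\mapsto f(x+a)-f(x)$ is a bijection of $\mathbb{F}_Q$. For planar $f$, the projective plane $\Pi_f$ has point set $\{(x,y):x,y\in\mathbb{F}_Q\}\cup\{(x):x\in\mathbb{F}_Q\}\cup\{(\infty)\}$ and lines $[a,b]=\{(x,f(x-a)+b):x\in\mathbb{F}_Q\}\cup\{(a)\}$, $[c]=\{(c,y):y\in\mathbb{F}_Q\}\cup\{(\infty)\}$, $[\infty]=\{(c):c\in\mathbb{F}_Q\}\cup\{(\infty)\}$ ($a,b,c\in\mathbb{F}_Q$), with incidence being containment. It has the polarity $\omega$ given by $(\infty)^\omega=[\infty]$, $[\infty]^\omega=(\infty)$, $(c)^\omega=[-c]$, $[c]^\omega=(-c)$, $(x,y)^\omega=[-x,-y]$, $[a,b]^\omega=(-a,-b)$. The graph $G_f$ has as vertices the points of $\Pi_f$, with two distinct points $p_1,p_2$ adjacent iff $p_1$ lies on the line $p_2^\omega$. (In particular distinct $(x_1,y_1),(x_2,y_2)$ are adjacent iff $f(x_1+x_2)=y_1+y_2$.) Here this is applied with $Q=q^2$. *)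

From HB Require Import structures.
From mathcomp Require Import all_boot all_order all_algebra.
Set Implicit Arguments. Unset Strict Implicit. Unset Printing Implicit Defensive.
Import GRing.Theory.
Local Open Scope ring_scope.

Section Plane.
Variable F : finFieldType.

Definition planar (f : {poly F}) : Prop :=
  forall a : F, a != 0 -> bijective (fun x : F => f.[x + a] - f.[x]).

(* Points of Pi_f:  inl (x,y) = (x,y);  inr (inl c) = (c);  inr (inr tt) = (oo). *)
Definition point : finType := ((F * F) + (F + unit))%type.
(* Lines of Pi_f:   inl (a,b) = [a,b];  inr (inl c) = [c];  inr (inr tt) = [oo]. *)
Definition line : finType := ((F * F) + (F + unit))%type.

Definition incident (f : {poly F}) (P : point) (L : line) : bool :=
  match L, P with
  | inl (a, b), inl (x, y) => y == f.[x - a] + b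
  | inl (a, b), inr (inl c) => c == a
  | inl _, inr (inr _) => false
  | inr (inl c), inl (x, _) => x == c
  | inr (inl _), inr (inl _) => false
  | inr (inl _), inr (inr _) => true
  | inr (inr _), inl _ => false
  | inr (inr _), inr _ => true
  end.

Definition polar (P : point) : line :=
  match P with
  | inl (x, y) => inl (- x, - y)
  | inr (inl c) => inr (inl (- c))
  | inr (inr u) => inr (inr u)
  end.

Definition Gadj (f : {poly F}) (p1 p2 : point) : bool :=
  (p1 != p2) && incident f p1 (polar p2).

Definition independent (f : {poly F}) (S : {set point}) : bool :=
  [forall p1 in S, forall p2 in S, ~~ Gadj f p1 p2].

Definition alpha (f : {poly F}) : nat :=
  \max_(S : {set point} | independent f S) #|S|.

End Plane.

From HB Require Import structures.
From mathcomp Require Import all_boot all_order all_algebra finfield zify ring.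
Set Implicit Arguments.
Unset Strict Implicit.
Unset Printing Implicit Defensive.
Import GRing.Theory.
Local Open Scope ring_scope.

(* Let F_q be the fixed field of x |-> x^q in F = F_(q^2), and tau y = y^q - y.
   Choose a set H containing exactly one of w, -w for every w != 0.  The points
   (x, y) with x in F_q and tau y in H are pairwise non-adjacent: adjacency
   means f(x1 + x2) = y1 + y2, and f(x1 + x2) lies in F_q because x1 + x2 does
   and f has coefficients in F_q, so tau y1 = - tau y2.  Since tau is additive
   with kernel F_q, there are q (q^2 - q) / 2 such points. *)

Lemma card_rootsXn_leq (F : finFieldType) (c : F) (q : nat) :
  (1 < q)%N -> (#|[set x : F | (x ^+ q == c * x)%R]| <= q)%N.
Proof.
move=> q_gt1; pose P : {poly F} := 'X^q - c *: 'X.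
have sizeP : size P = q.+1.
  rewrite size_polyDl size_polyXn // size_polyN.
  by apply: leq_ltn_trans (size_scale_leq _ _) _; rewrite size_polyX.
have P_neq0 : P != 0 by rewrite -size_poly_eq0 sizeP.
rewrite cardE -ltnS -sizeP; apply: max_poly_roots P_neq0 _ (enum_uniq _).
apply/allP => x; rewrite mem_enum inE => /eqP xq.
by rewrite /root !hornerE xq subrr.
Qed.

Lemma card_zmod_morphism_kernel (V W : finZmodType) (g : V -> W) :
  {morph g : x y / x - y} ->
  #|V| = (#|[set g x | x : V]| * #|[set x | g x == 0%R]|)%N.
Proof.
move=> gB; rewrite -[LHS]sum1_card (partition_big g (mem [set g x | x : V])) /=.
  rewrite -sum_nat_const; apply: eq_bigr => w; case/imsetP => x0 _ ->.
  rewrite sum1_card -(card_imset [set x | g x == 0] (addrI x0)).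
  apply: eq_card => x; apply/eqP/imsetP => [gx | [y ker_y ->]].
    by exists (x - x0); rewrite ?inE ?gB ?gx ?subrr // addrC subrK.
  move: ker_y; rewrite inE => /eqP gy.
  by apply/eqP; rewrite -subr_eq0 -gB addrC addKr gy.
by move=> x _; apply: imset_f.
Qed.

Lemma leq_card_alpha (F : finFieldType) (f : {poly F}) (S : {set point F}) :
  independent f S -> (#|S| <= alpha f)%N.
Proof. exact: (leq_bigmax_cond (F := fun S : {set point F} => #|S|)). Qed.

Lemma Gadj_inl (F : finFieldType) (f : {poly F}) (x1 y1 x2 y2 : F) :
  Gadj f (inl (x1, y1)) (inl (x2, y2)) -> f.[x1 + x2] = y1 + y2.
Proof. by rewrite /Gadj /= => /andP [_ /eqP ->]; rewrite opprK subrK. Qed.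

Section HalfSet.
Variable V : finZmodType.

(* enum_rank only serves to pick one element out of each pair {w, -w}. *)
Definition half_set : {set V} := [set w | enum_rank w < enum_rank (- w)]%N.

Lemma half_setN w : w \in half_set -> (- w \in half_set) = false.
Proof. by rewrite !inE opprK => lt_w; apply/negbTE; rewrite -leqNgt ltnW. Qed.

Lemma half_set_or_opp w : w != - w -> (w \in half_set) || (- w \in half_set).
Proof.
rewrite -(inj_eq enum_rank_inj) !inE opprK neq_ltn.
by case/orP => ->; rewrite ?orbT.
Qed.

End HalfSet.

Section Frobenius.
Variables (F : finFieldType) (q : nat).
Hypothesis pchar_q : [pchar F].-nat q.

Definition frobq (x : F) := x ^+ q.

Lemma frobq_is_zmod_morphism : {morph frobq : x y / x - y}.
Proof. by move=> x y; rewrite /frobq exprDn_pchar // exprNn_pchar. Qed.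

Lemma frobq_is_monoid_morphism : monoid_morphism frobq.
Proof. by split=> [|x y]; rewrite /frobq ?expr1n ?exprMn. Qed.

HB.instance Definition _ :=
  GRing.isZmodMorphism.Build F F frobq frobq_is_zmod_morphism.
HB.instance Definition _ :=
  GRing.isMonoidMorphism.Build F F frobq frobq_is_monoid_morphism.

Lemma frobqD x y : frobq (x + y) = frobq x + frobq y.
Proof. exact: rmorphD. Qed.

Lemma frobqB x y : frobq (x - y) = frobq x - frobq y.
Proof. exact: rmorphB. Qed.

Lemma frobqN x : frobq (- x) = - frobq x.
Proof. exact: rmorphN. Qed.

Definition frobq_fixed : {set F} := [set x | frobq x == x].

Lemma frobq_fixedD : {in frobq_fixed &, forall x y, x + y \in frobq_fixed}.
Proof. by move=> x y; rewrite !inE frobqD => /eqP-> /eqP->. Qed.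

Lemma horner_frobq_fixed (f : {poly F}) z :
  (forall i, frobq f`_i = f`_i) -> z \in frobq_fixed -> f.[z] \in frobq_fixed.
Proof.
move=> f_fixed; rewrite !inE => /eqP z_fixed.
have map_f : map_poly frobq f = f by apply/polyP => i; rewrite coef_map.
apply/eqP; rewrite -{2}map_f -{2}z_fixed; exact/esym/horner_map.
Qed.

Definition frobq_sub (y : F) := frobq y - y.

Lemma frobq_subB x y : frobq_sub (x - y) = frobq_sub x - frobq_sub y.
Proof. by rewrite /frobq_sub frobqB; ring. Qed.

Lemma frobq_subD x y : frobq_sub (x + y) = frobq_sub x + frobq_sub y.
Proof. by rewrite /frobq_sub frobqD; ring. Qed.

Lemma frobq_subN x : frobq_sub (- x) = - frobq_sub x.
Proof. by rewrite /frobq_sub frobqN; ring. Qed.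

Lemma frobq_fixedE x : (x \in frobq_fixed) = (frobq_sub x == 0).
Proof. by rewrite inE subr_eq0. Qed.

Definition frobq_half : {set F} := frobq_sub @^-1: half_set F.

Lemma mem_frobq_half y : (y \in frobq_half) = (frobq_sub y \in half_set F).
Proof. by rewrite !inE. Qed.

Lemma independent_frobq_half (f : {poly F}) :
  (forall i, frobq f`_i = f`_i) ->
  independent f [set inl xy | xy in setX frobq_fixed frobq_half].
Proof.
move=> f_fixed; apply/forall_inP => p1 /imsetP [[x1 y1] xy1 ->].
apply/forall_inP => p2 /imsetP [[x2 y2] xy2 ->]; apply/negP => /Gadj_inl f_sum.
move: xy1 xy2; rewrite !in_setX /=.
move=> /andP [x1_fixed y1_half] /andP [x2_fixed y2_half].
have := horner_frobq_fixed f_fixed (frobq_fixedD x1_fixed x2_fixed).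
rewrite f_sum frobq_fixedE frobq_subD addr_eq0 => /eqP y1E.
by move: y2_half y1_half; rewrite !mem_frobq_half y1E => /half_setN ->.
Qed.

Section Counting.
Hypotheses (q_gt1 : (1 < q)%N) (cardF : #|F| = (q ^ 2)%N).

Lemma frobqK : involutive frobq.
Proof. by move=> x; rewrite /frobq -exprM mulnn -cardF expf_card. Qed.

Lemma card_frobq_fixed : #|frobq_fixed| = q.
Proof.
have := card_zmod_morphism_kernel frobq_subB; rewrite cardF.
set im := [set _ | _ in _].
have -> : #|[set x | frobq_sub x == 0]| = #|frobq_fixed|.
  by apply: eq_card => x; rewrite frobq_fixedE inE.
have fixed_le : (#|frobq_fixed| <= q)%N.
  apply: leq_trans (card_rootsXn_leq 1 q_gt1); apply: subset_leq_card.
  by apply/subsetP => x; rewrite !inE mul1r.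
have image_le : (#|im| <= q)%N.
  apply: leq_trans (card_rootsXn_leq (-1) q_gt1); apply: subset_leq_card.
  apply/subsetP => _ /imsetP [y _ ->]; rewrite inE mulN1r.
  by rewrite -[_ ^+ q]/(frobq _) /frobq_sub frobqB frobqK opprB.
move=> card_prod; apply/eqP; rewrite eqn_leq fixed_le leqNgt.
by apply/negP => fixed_lt; have := leq_mul image_le fixed_lt; nia.
Qed.

Hypothesis two_neq0 : 2%:R != 0 :> F.

Lemma neq_oppr (w : F) : w != 0 -> w != - w.
Proof.
by rewrite -addr_eq0 -mulr2n -mulr_natl mulf_eq0 negb_or two_neq0.
Qed.

Lemma card_frobq_half : (#|frobq_half| * 2 = q ^ 2 - q)%N.
Proof.
pose negY := [set y | - y \in frobq_half].
have memN y : (y \in negY) = (- frobq_sub y \in half_set F).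
  by rewrite inE mem_frobq_half frobq_subN.
have disjoint_halves : frobq_half :&: negY = set0.
  apply/setP => y; rewrite in_setI in_set0 memN mem_frobq_half.
  by case: (boolP (frobq_sub y \in half_set F)) => // /half_setN ->.
have cover : ~: frobq_fixed = frobq_half :|: negY.
  apply/setP => y; rewrite in_setC in_setU memN mem_frobq_half frobq_fixedE.
  have [-> | /neq_oppr/half_set_or_opp -> //] := eqVneq (frobq_sub y) 0.
  by rewrite oppr0 orbb inE oppr0 ltnn.
have card_negY : #|negY| = #|frobq_half|.
  rewrite -(card_preimset _ (@oppr_inj F)).
  by apply: eq_card => y; rewrite !inE.
have := cardsU frobq_half negY.
rewrite -cover disjoint_halves cards0 subn0 card_negY.
have := cardsC frobq_fixed; rewrite card_frobq_fixed cardF; lia.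
Qed.

End Counting.

End Frobenius.

Theorem theorem1 (p k q : nat) (F : finFieldType) (f : {poly F}) :
  prime p -> odd p -> (0 < k)%N -> q = (p ^ k)%N ->
  #|F| = (q ^ 2)%N ->
  (forall i : nat, f`_i ^+ q = f`_i) ->
  planar f ->
  (q ^ 2 * (q - 1) <= 2 * alpha f)%N.
Proof.
move=> p_prime p_odd k_gt0 qE cardF f_fixed _.
have p_gt2 : (2 < p)%N by case: p p_prime p_odd {qE} => [|[|[|]]].
have q_gt1 : (1 < q)%N by rewrite qE -(expn0 p) ltn_exp2l // ltnW.
have pcharF : p \in [pchar F].
  by apply: (card_finPcharP (n := (k * 2)%N)); rewrite // cardF qE expnM.
have pchar_q : [pchar F].-nat q by rewrite qE pnatX (pnatE _ p_prime) pcharF.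
have two_neq0 : 2%:R != 0 :> F.
  by rewrite -(dvdn_pcharf pcharF); apply/negP => /dvdn_leq; lia.
have := leq_card_alpha (independent_frobq_half pchar_q f_fixed).
rewrite card_imset; last by move=> ? ? [].
rewrite cardsX card_frobq_fixed //.
have := card_frobq_half pchar_q q_gt1 cardF two_neq0; nia.
Qed.
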